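(* Let $x$ and $y$ be twin vertices of a graph $G$. Then there is a maximum independent set $I_{\widehat{G}}$ of the line-incompatibility graph $\widehat{G}$ of $G$ such that $xy\in I_{\widehat{G}}$ and, for every vertex $u\in N(x)$, $xu\in I_{\widehat{G}}$ if and only if $yu\in I_{\widehat{G}}$.
   Context: All graphs are finite, simple and undirected. $N(v)$ is the neighbourhood of $v$ and $N[v]=N(v)\cup\{v\}$. Two adjacent vertices $x,y$ are twins if $N[x]=N[y]$. The line-incompatibility graph $\widehat{G}$ of $G$ has one node $uv$ for each edge $\{u,v\}$ of $G$, and two nodes are adjacent if and only if the corresponding edges are of the form $\{u,v\},\{v,w\}$ with $\{u,w\}\notin E(G)$ (their endpoints induce a $P_3$ in $G$). *)

From mathcomp Require Import all_boot.
Set Implicit Arguments. Unset Strict Implicit. Unset Printing Implicit Defensive.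

Definition simple_graph (T : finType) (g : rel T) :=
  symmetric g /\ irreflexive g.

Definition nbh (T : finType) (g : rel T) (v : T) : {set T} := [set u | g v u].
Definition cnbh (T : finType) (g : rel T) (v : T) : {set T} := v |: nbh g v.

Definition twins (T : finType) (g : rel T) (x y : T) :=
  g x y /\ cnbh g x = cnbh g y.

Definition edge_node (T : finType) (u v : T) : {set T} := [set u; v].

Definition lig_nodes (T : finType) (g : rel T) : {set {set T}} :=
  [set S : {set T} | [exists u, exists v, g u v && (S == edge_node u v)]].

(* Adjacency in the line-incompatibility graph: the edges are {u,v},{v,w}
   with {u,w} not an edge (u,v,w induce a P3). *)
Definition lig_adj (T : finType) (g : rel T) (S1 S2 : {set T}) : bool :=
  [exists u, exists v, exists w,
     [&& g u v, g v w, u != w, ~~ g u w,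
         S1 == edge_node u v & S2 == edge_node v w]].

Definition lig_independent (T : finType) (g : rel T) (I : {set {set T}}) :=
  (I \subset lig_nodes g) &&
  [forall S1 in I, forall S2 in I, ~~ lig_adj g S1 S2].

Definition lig_maximum_independent (T : finType) (g : rel T)
    (I : {set {set T}}) :=
  lig_independent g I /\
  forall J : {set {set T}}, lig_independent g J -> #|J| <= #|I|.

From mathcomp Require Import all_boot perm zify.
Set Implicit Arguments. Unset Strict Implicit. Unset Printing Implicit Defensive.

(* Swapping the twins x and y is an automorphism of G, hence of its
   line-incompatibility graph, and the edge xy is isolated there.  Given a
   maximum independent set I, let A (resp. B) be its edges meeting x but not y
   (resp. y but not x).  Replacing B by the swapped copy of A and adding xy
   keeps the set independent: an edge xu and an edge yv never form an induced
   P3 since x and y are adjacent, and every other mixed pair is the swap of a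
   pair inside I.  This loses at most |B| - |A| nodes, and the exchange with the
   roles of x and y reversed loses at most |A| - |B|, so one of the two is again
   maximum; by construction it contains xu exactly when it contains yu. *)

Section LigAdjacency.
Variables (T : finType) (g : rel T).

Lemma edge_nodeC (u v : T) : edge_node u v = edge_node v u.
Proof. exact: setUC. Qed.

Lemma mem_edge_node (u v z : T) : (z \in edge_node u v) = (z == u) || (z == v).
Proof. by rewrite !inE. Qed.

Lemma lig_adjP (S1 S2 : {set T}) :
  reflect (exists u v w, [/\ g u v, g v w, u != w, ~~ g u w &
                             S1 = edge_node u v /\ S2 = edge_node v w])
          (lig_adj g S1 S2).
Proof.
apply: (iffP existsP) => [[u /existsP[v /existsP[w]]] | [u [v [w]]]].
  by case/and5P=> guv gvw uw nguw /andP[/eqP-> /eqP->]; exists u, v, w.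
case=> guv gvw uw nguw [-> ->]; exists u; apply/existsP; exists v.
by apply/existsP; exists w; rewrite guv gvw uw nguw !eqxx.
Qed.

Lemma lig_adj_sym : symmetric g -> symmetric (lig_adj g).
Proof.
move=> gC; suff adjC S1 S2 : lig_adj g S1 S2 -> lig_adj g S2 S1.
  by move=> S1 S2; apply/idP/idP; apply: adjC.
case/lig_adjP=> u [v [w [guv gvw uw nguw [-> ->]]]]; apply/lig_adjP.
exists w, v, u; rewrite [g w v]gC [g v u]gC [g w u]gC eq_sym.
by rewrite (edge_nodeC w) (edge_nodeC v u).
Qed.

Lemma lig_independentP (I : {set {set T}}) :
  reflect (I \subset lig_nodes g /\ {in I &, forall S1 S2, ~~ lig_adj g S1 S2})
          (lig_independent g I).
Proof.
apply: (iffP andP) => [[sub /forall_inP adjI] | [sub adjI]]; split=> //.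
  by move=> S1 S2 /adjI /forall_inP; apply.
by apply/forall_inP=> S1 S1I; apply/forall_inP=> S2 S2I; apply: adjI.
Qed.

Lemma lig_maximum_independent_exists :
  exists I, lig_maximum_independent g I.
Proof.
have indep0 : lig_independent g set0.
  by apply/lig_independentP; split=> [|S1 S2]; rewrite ?sub0set ?inE.
case: (arg_maxnP (fun I : {set {set T}} => #|I|) indep0) => I indepI maxI.
by exists I; split=> // J /maxI.
Qed.

End LigAdjacency.

Section InvolutiveAutomorphism.
Variables (T : finType) (g : rel T) (f : T -> T).
Hypotheses (fK : involutive f) (f_mono : {mono f : u v / g u v}).

Lemma preimset_edge_node u v : f @^-1: edge_node u v = edge_node (f u) (f v).
Proof. by apply/setP=> z; rewrite !inE !(inv_eq fK). Qed.

Lemma preimsetK (S : {set T}) : f @^-1: (f @^-1: S) = S.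
Proof. by apply/setP=> z; rewrite !inE fK. Qed.

Lemma lig_adj_preimset (S1 S2 : {set T}) :
  lig_adj g (f @^-1: S1) (f @^-1: S2) = lig_adj g S1 S2.
Proof.
suff adj_f S3 S4 : lig_adj g S3 S4 -> lig_adj g (f @^-1: S3) (f @^-1: S4).
  by apply/idP/idP=> [/adj_f|/adj_f//]; rewrite !preimsetK.
case/lig_adjP=> u [v [w [guv gvw uw nguw [-> ->]]]]; apply/lig_adjP.
exists (f u), (f v), (f w).
by rewrite !f_mono (inj_eq (inv_inj fK)) !preimset_edge_node.
Qed.

Lemma lig_nodes_preimset (S : {set T}) :
  (f @^-1: S \in lig_nodes g) = (S \in lig_nodes g).
Proof.
suff node_f S' : S' \in lig_nodes g -> f @^-1: S' \in lig_nodes g.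
  by apply/idP/idP=> [/node_f|/node_f//]; rewrite preimsetK.
rewrite !inE => /existsP[u /existsP[v /andP[guv /eqP->]]].
apply/existsP; exists (f u); apply/existsP; exists (f v).
by rewrite f_mono guv preimset_edge_node eqxx.
Qed.

End InvolutiveAutomorphism.

Lemma preimset_tperm_id (T : finType) (a b : T) (S : {set T}) :
  (a \in S) = (b \in S) -> tperm a b @^-1: S = S.
Proof. by move=> abS; apply/setP=> z; rewrite inE; case: tpermP=> [->|->|]. Qed.

Definition at_only (T : finType) (a b : T) : {set {set T}} :=
  [set S : {set T} | (a \in S) && (b \notin S)].

Lemma lig_adj_at_only (T : finType) (g : rel T) (a b : T) (S1 S2 : {set T}) :
  g a b -> S1 \in at_only a b -> S2 \in at_only b a -> ~~ lig_adj g S1 S2.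
Proof.
move=> gab; rewrite !inE => /andP[aS1 bS1] /andP[bS2 aS2].
apply/negP=> /lig_adjP[u [v [w [_ _ _ nguw [S1uv S2vw]]]]].
move: aS1 bS1 bS2 aS2; rewrite S1uv S2vw !mem_edge_node.
have [-> | av] := eqVneq a v; first by rewrite orbT.
have [-> | bv] := eqVneq b v; first by rewrite !orbT.
by rewrite !orbF => /eqP au _ /eqP bw _; move: nguw; rewrite -au -bw gab.
Qed.

Section Twins.
Variables (T : finType) (g : rel T) (a b : T).
Hypotheses (gs : simple_graph g) (tw : twins g a b).

Lemma twins_sym : twins g b a.
Proof. by case: tw => gab eqN; split; [rewrite gs.1 | rewrite eqN]. Qed.

Lemma twins_neq : a != b.
Proof. by apply: contraTneq tw.1 => ->; rewrite gs.2. Qed.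

Lemma twins_nbh w : w != a -> w != b -> g a w = g b w.
Proof.
move=> wa wb; have /setP/(_ w) := tw.2.
by rewrite !inE (negbTE wa) (negbTE wb).
Qed.

Lemma twins_tperm_mono : {mono tperm a b : u v / g u v}.
Proof.
have [gC girr] := gs; have gab := tw.1.
move=> u v; case: tpermP => [->|->|/eqP ua /eqP ub];
  case: tpermP => [->|->|/eqP va /eqP vb]; rewrite ?girr ?[g b a]gC //.
- by rewrite twins_nbh // eq_sym.
- by rewrite -twins_nbh // eq_sym.
- by rewrite [g u b]gC [g u a]gC twins_nbh.
- by rewrite [g u b]gC [g u a]gC twins_nbh.
Qed.

Lemma lig_adj_twin_edge S : ~~ lig_adj g (edge_node a b) S.
Proof.
apply/negP=> /lig_adjP[u [v [w [_ gvw uw nguw [abuv _]]]]].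
have w_out : w \notin edge_node a b.
  rewrite abuv mem_edge_node negb_or eq_sym uw /=.
  by apply: contraTneq gvw => ->; rewrite gs.2.
have g_w z : z \in edge_node a b -> g z w = g a w.
  rewrite mem_edge_node => /orP[] /eqP-> //.
  move: w_out; rewrite mem_edge_node negb_or => /andP[wa wb].
  by rewrite twins_nbh.
have uab : u \in edge_node a b by rewrite abuv mem_edge_node eqxx.
have vab : v \in edge_node a b by rewrite abuv mem_edge_node eqxx orbT.
by move: nguw; rewrite g_w // -(g_w v) // gvw.
Qed.

End Twins.

Definition twin_exchange (T : finType) (a b : T) (I : {set {set T}}) :
    {set {set T}} :=
  edge_node a b |: ((I :\: at_only b a) :|:
                    [set S : {set T} | tperm a b @^-1: S \in I :&: at_only a b]).

Lemma mem_twin_exchange (T : finType) (a b : T) (I : {set {set T}}) S :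
  (S \in twin_exchange a b I) =
  [|| S == edge_node a b, (S \in I) && (S \notin at_only b a)
    | (tperm a b @^-1: S \in I) && (S \in at_only b a)].
Proof.
by rewrite !inE andbC; congr [|| _, _ | _ && _]; rewrite tpermL tpermR.
Qed.

Lemma card_twin_exchange (T : finType) (a b : T) (I : {set {set T}}) :
  #|I| + #|I :&: at_only a b| <= #|twin_exchange a b I| + #|I :&: at_only b a|.
Proof.
set swapped := [set S : {set T} | tperm a b @^-1: S \in I :&: at_only a b].
have disj : (I :\: at_only b a) :&: swapped = set0.
  apply/setP=> S; rewrite !inE tpermL tpermR.
  by case: (a \in S); case: (b \in S); rewrite /= ?andbF.
have card_swapped : #|swapped| = #|I :&: at_only a b|.
  exact: (card_preimset _ (inv_inj (preimsetK (tpermK a b)))).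
have card_sub : #|(I :\: at_only b a) :|: swapped| <= #|twin_exchange a b I|.
  exact/subset_leq_card/subsetU1.
have := cardsUI (I :\: at_only b a) swapped.
rewrite disj cards0 card_swapped addn0.
by have := cardsID (at_only b a) I; lia.
Qed.

Section TwinExchange.
Variables (T : finType) (g : rel T) (a b : T) (I : {set {set T}}).
Hypotheses (gs : simple_graph g) (tw : twins g a b).

Lemma twin_exchange_independent :
  lig_independent g I -> lig_independent g (twin_exchange a b I).
Proof.
case/lig_independentP=> subI adjI; have gab := tw.1.
have tperm_mono := twins_tperm_mono gs tw.
have swap_adj (S1 S2 : {set T}) :
    lig_adj g (tperm a b @^-1: S1) (tperm a b @^-1: S2) = lig_adj g S1 S2.
  exact: (lig_adj_preimset (tpermK a b) tperm_mono).
have adjC := lig_adj_sym gs.1; have twin_edge := lig_adj_twin_edge gs tw.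
have mixed (S1 S2 : {set T}) : S1 \in I -> S1 \notin at_only b a ->
    tperm a b @^-1: S2 \in I -> S2 \in at_only b a -> ~~ lig_adj g S1 S2.
  have [S1ab S1I _ _ S2ba | S1nab S1I S1nba S2I _] := boolP (S1 \in at_only a b).
    exact: lig_adj_at_only gab S1ab S2ba.
  have fixS1 : tperm a b @^-1: S1 = S1.
    apply: preimset_tperm_id; move: S1nab S1nba; rewrite !inE.
    by case: (a \in S1); case: (b \in S1).
  by rewrite -swap_adj fixS1; apply: adjI.
apply/lig_independentP; split.
  apply/subsetP=> S; rewrite mem_twin_exchange.
  case/or3P=> [/eqP-> | /andP[SI _] | /andP[SI _]].
  - rewrite inE; apply/existsP; exists a; apply/existsP; exists b.
    by rewrite gab eqxx.
  - exact: (subsetP subI).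
  - rewrite -(lig_nodes_preimset (tpermK a b) tperm_mono).
    exact: (subsetP subI).
move=> S1 S2; rewrite !mem_twin_exchange.
case/or3P=> [/eqP-> _ | /andP[I1 N1] | /andP[I1 B1]]; first exact: twin_edge.
all: case/or3P=> [/eqP-> | /andP[I2 N2] | /andP[I2 B2]];
  first by rewrite adjC twin_edge.
- exact: adjI.
- exact: mixed.
- by rewrite adjC; apply: mixed.
- by rewrite -swap_adj; apply: adjI.
Qed.

Lemma twin_exchange_twin_edges u : u != a -> u != b ->
  (edge_node a u \in twin_exchange a b I) =
  (edge_node b u \in twin_exchange a b I).
Proof.
move=> ua ub; have ab := twins_neq gs tw.
have swap_au : tperm a b @^-1: edge_node b u = edge_node a u.
  by rewrite (preimset_edge_node (tpermK a b)) tpermR tpermD // eq_sym.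
have bu_ba : edge_node b u \in at_only b a.
  by rewrite inE !mem_edge_node eqxx /= negb_or ab (eq_sym a) ua.
have au_nba : edge_node a u \notin at_only b a.
  by rewrite inE !mem_edge_node eqxx /= andbF.
have ne_ab v : (edge_node v u == edge_node a b) = false.
  apply/negbTE/eqP => /setP/(_ u).
  by rewrite !mem_edge_node eqxx orbT (negbTE ua) (negbTE ub).
rewrite !mem_twin_exchange swap_au (negbTE au_nba) bu_ba !ne_ab /=.
by rewrite !andbT !andbF orbF.
Qed.

Lemma twin_exchange_maximum :
  lig_maximum_independent g I -> #|I| <= #|twin_exchange a b I| ->
  lig_maximum_independent g (twin_exchange a b I).
Proof.
case=> indepI maxI le_I; split; first exact: twin_exchange_independent.
by move=> J /maxI /leq_trans; apply.
Qed.

End TwinExchange.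

Theorem lemma6 (T : finType) (g : rel T) (x y : T) :
  simple_graph g -> twins g x y ->
  exists I : {set {set T}},
    [/\ lig_maximum_independent g I,
        edge_node x y \in I &
        forall u, u \in nbh g x -> u != y ->
          (edge_node x u \in I) = (edge_node y u \in I)].
Proof.
move=> gs tw; have twC := twins_sym gs tw.
have [I maxI] := lig_maximum_independent_exists g.
have nbh_neq u : u \in nbh g x -> u != x.
  by rewrite inE; apply: contraTneq => ->; rewrite gs.2.
have : (#|I| <= #|twin_exchange x y I|) || (#|I| <= #|twin_exchange y x I|).
  by have := card_twin_exchange x y I; have := card_twin_exchange y x I; lia.
case/orP=> le_I.
- exists (twin_exchange x y I); split.
  + exact: twin_exchange_maximum.
  + by rewrite mem_twin_exchange eqxx.
  + move=> u /nbh_neq ux uy.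
    by rewrite (twin_exchange_twin_edges I gs tw ux uy).
- exists (twin_exchange y x I); split.
  + exact: twin_exchange_maximum.
  + by rewrite edge_nodeC mem_twin_exchange eqxx.
  + move=> u /nbh_neq ux uy.
    by rewrite (twin_exchange_twin_edges I gs twC uy ux).
Qed.
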